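(* Let $X$ be a Priestley space and $\mathcal U\subseteq{\sf DM}(X)$. Then the join $\bigvee\mathcal U$ in ${\sf DM}(X)$ is distributive (i.e., $V\cap\bigvee\mathcal U=\bigvee\{V\cap U:U\in\mathcal U\}$ in ${\sf DM}(X)$ for every $V\in{\sf DM}(X)$) if and only if $\bigvee\mathcal U={\sf int_1\,cl}\bigcup\mathcal U$.
   Context: A Priestley space is a compact space $X$ with a partial order $\le$ such that whenever $x\not\le y$ there is a clopen upset containing $x$ but not $y$. ${\sf cl}$, ${\sf int}$ denote closure and interior in the topology of $X$; ${\sf int_1}$ is the interior in the topology of open upsets, ${\sf cl_2}$ the closure in the topology of open downsets; explicitly ${\sf cl_2}(S)={\uparrow}{\sf cl}(S)$ and ${\sf int_1}(S)=X\setminus{\downarrow}(X\setminus{\sf int}(S))$. A DM-set is an open upset $U$ with ${\sf int_1\,cl_2}(U)=U$; ${\sf DM}(X)$ is the complete lattice of DM-sets, with finite meets given by intersection and joins $\bigvee\mathcal U={\sf int_1\,cl_2}(\bigcup\mathcal U)$. *)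

From HB Require Import structures.
From mathcomp Require Import all_boot all_order.
From mathcomp Require Import all_classical topology.
Set Implicit Arguments. Unset Strict Implicit. Unset Printing Implicit Defensive.
Local Open Scope classical_set_scope.

Section Priestley.
Context {T : topologicalType} (le : T -> T -> Prop).

Definition is_partial_order : Prop :=
  (forall x, le x x) /\ (forall x y, le x y -> le y x -> x = y) /\
  (forall x y z, le x y -> le y z -> le x z).

Definition is_upset (A : set T) : Prop := forall x y, A x -> le x y -> A y.

Definition is_clopen (A : set T) : Prop := open A /\ closed A.

Definition priestley : Prop :=
  compact [set: T] /\ is_partial_order /\
  (forall x y, ~ le x y ->
     exists U : set T, is_clopen U /\ is_upset U /\ U x /\ ~ U y).

Definition upclosure (A : set T) : set T := [set y | exists2 x, A x & le x y].
Definition downclosure (A : set T) : set T := [set y | exists2 x, A x & le y x].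

Definition cl2 (S : set T) : set T := upclosure (closure S).
Definition int1 (S : set T) : set T := ~` downclosure (~` interior S).

Definition is_DM (U : set T) : Prop :=
  open U /\ is_upset U /\ int1 (cl2 U) = U.

Definition DMjoin (UU : set (set T)) : set T := int1 (cl2 (\bigcup_(U in UU) U)).

Definition DMjoin_distributive (UU : set (set T)) : Prop :=
  forall V, is_DM V -> V `&` DMjoin UU = DMjoin [set V `&` U | U in UU].

End Priestley.

From mathcomp Require Import all_boot all_order.
From mathcomp Require Import all_classical topology.
Local Open Scope classical_set_scope.

(* Write W for the union of the family and J = int1 (cl2 W) for its DM-join.
   In a Priestley space int1 of any set is an open upset (compactness turns the
   separation of a point from a closed set into a single clopen upset), and the
   differences C \ D of clopen upsets form a neighbourhood basis.  If the join
   is distributive and z in J lies outside cl W, choose such a C \ D around z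
   missing W: then C /\ W <= D, so z lies in C /\ J = int1 (cl2 (C /\ W)),
   which is contained in the DM-set D, a contradiction.  Hence the open upset
   J is contained in cl W, hence in int1 (cl W).  Conversely, if
   J = int1 (cl W) and V is open, then near every point of V the closure of W
   agrees with the closure of V /\ W, so V /\ J = int1 (cl2 (V /\ W)). *)

Section CompactSeparation.
Context {T : topologicalType}.

Lemma compact_separation (P : set (set T)) (z : T) (F : set T) :
  P setT -> setI_closed P -> (forall A, P A -> closed A) -> compact F ->
  (forall w, F w -> exists2 A, P A & A z /\ ~ A w) ->
  exists2 A, P A & A z /\ A `<=` ~` F.
Proof.
move=> PT PI Pcl cF sep; apply: contrapT => noA.
(* Otherwise the traces on F of the members of P containing z generate a
   proper filter, and [sep] rules out each of its cluster points in F. *)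
pose G := filter_from [set A | P A /\ A z] (fun A => A `&` F).
have GF : ProperFilter G.
  apply: filter_from_proper.
    apply: filter_from_filter; first by exists setT.
    move=> A B [PA Az] [PB Bz]; exists (A `&` B); first by split; [exact: PI|].
    by move=> x [[Ax Bx] Fx].
  move=> A [PA Az]; apply: contrapT => AF0; apply: noA; exists A => //.
  by split => // w Aw Fw; apply: AF0; exists w.
have [|w [Fw Gw]] := cF G GF; first by exists setT => [|x []].
have [A PA [Az nAw]] := sep w Fw.
have nbhs_nA : nbhs w (~` A).
  by apply: open_nbhs_nbhs; split => //; exact: closed_openC (Pcl A PA).
have [|p [[Ap _] nAp]] := Gw (A `&` F) (~` A) _ nbhs_nA; first by exists A.
exact: nAp Ap.
Qed.

End CompactSeparation.

Definition clopen_upset {T : topologicalType} (le : T -> T -> Prop)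
  (A : set T) := clopen A /\ is_upset le A.

Section Order.
Context {T : topologicalType} {le : T -> T -> Prop}.

Lemma clopen_upsetT : clopen_upset le setT.
Proof. by split; [exact: clopenT|]. Qed.

Lemma clopen_upset0 : clopen_upset le set0.
Proof. by split; [exact: clopen0|]. Qed.

Lemma clopen_upsetI : setI_closed (clopen_upset le).
Proof.
move=> A B [cA uA] [cB uB]; split; first exact: clopenI.
by move=> x y [Ax Bx] xy; split; [exact: uA Ax xy|exact: uB Bx xy].
Qed.

Lemma clopen_upsetU : setU_closed (clopen_upset le).
Proof.
move=> A B [cA uA] [cB uB]; split; first exact: clopenU.
by move=> x y [Ax|Bx] xy; [left; exact: uA Ax xy|right; exact: uB Bx xy].
Qed.

Lemma int1P S x : int1 le S x <-> forall y, le x y -> S° y.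
Proof.
split => [Sx y xy|Sx [y nSy xy]]; last exact: nSy (Sx y xy).
by apply: contrapT => nSy; apply: Sx; exists y.
Qed.

Lemma int1S A B : A `<=` B -> int1 le A `<=` int1 le B.
Proof. by move=> AB x /int1P Ax; apply/int1P => y /Ax; exact: interiorS. Qed.

Lemma cl2S A B : A `<=` B -> cl2 le A `<=` cl2 le B.
Proof. by move=> AB y [x Ax xy]; exists x => //; exact: closureS Ax. Qed.

Lemma open_upset_sub_int1 A S :
  open A -> is_upset le A -> A `<=` S -> A `<=` int1 le S.
Proof.
move=> oA uA AS x Ax; apply/int1P => y xy.
by apply: interiorS AS _ _; rewrite (interior_id A).1 //; exact: uA Ax xy.
Qed.

Lemma int1_cl2_sub_DM {D A : set T} :
  is_DM le D -> A `<=` D -> int1 le (cl2 le A) `<=` D.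
Proof. by move=> [_ [_ DE]] AD; rewrite -DE; apply/int1S/cl2S. Qed.

Hypothesis le_refl : forall x, le x x.

Lemma closure_sub_cl2 A : closure A `<=` cl2 le A.
Proof. by move=> x Ax; exists x. Qed.

Lemma int1_sub_interior S : int1 le S `<=` S°.
Proof. by move=> x /int1P; apply. Qed.

Lemma upclosure_upset A : is_upset le A -> upclosure le A = A.
Proof.
move=> uA; apply/seteqP; split => [y [x Ax xy]|y Ay]; first exact: uA Ax xy.
by exists y.
Qed.

Lemma clopen_upset_DM {C : set T} : clopen_upset le C -> is_DM le C.
Proof.
move=> [[oC cC] uC]; split=> //; split=> //.
rewrite /cl2 -(closure_id C).1 // upclosure_upset //.
apply/seteqP; split; last exact: open_upset_sub_int1.
by move=> x /int1_sub_interior; rewrite (interior_id C).1.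
Qed.

Lemma setI_int1_closure_sub V W : open V -> is_upset le V ->
  V `&` int1 le (closure W) `<=` int1 le (cl2 le (V `&` W)).
Proof.
move=> oV uV x [Vx /int1P Wx]; apply/int1P => y xy.
have Vy : nbhs y V by apply: open_nbhs_nbhs; split => //; exact: uV Vx xy.
apply: filterS (filterI Vy (Wx y xy)) => p [Vp clWp].
apply: closure_sub_cl2 => B pB.
have Vp' : nbhs p V by exact: open_nbhs_nbhs.
by have [q [Wq [Vq Bq]]] := clWp (V `&` B) (filterI Vp' pB); exists q.
Qed.

Hypothesis le_trans : forall x y z, le x y -> le y z -> le x z.

Lemma int1_upset S : is_upset le (int1 le S).
Proof.
move=> x y /int1P Sx xy; apply/int1P => w yw.
exact: Sx w (le_trans _ _ _ xy yw).
Qed.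

End Order.

Section Priestley.
Context {T : topologicalType} {le : T -> T -> Prop} (hX : priestley le).

Let compactT : compact [set: T] := hX.1.
Let le_refl : forall x, le x x := hX.2.1.1.
Let le_anti : forall x y, le x y -> le y x -> x = y := hX.2.1.2.1.
Let le_trans : forall x y z, le x y -> le y z -> le x z := hX.2.1.2.2.
Let priestley_sep x y :
  ~ le x y -> exists2 U, clopen_upset le U & U x /\ ~ U y.
Proof. by move=> /hX.2.2 [U [cU [uU UxUy]]]; exists U. Qed.

Lemma priestley_int1_open S : open (int1 le S).
Proof.
rewrite openE => y /int1P Sy.
have cF : compact (~` S°).
  apply: subclosed_compact compactT _ => //.
  by rewrite closedC; exact: open_interior.
have [|A [[oA _] uA] [Ay AS]] := compact_separation (clopen_upset le) y _
  clopen_upsetT clopen_upsetI (fun A PA => PA.1.2) cF.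
  by move=> w nSw; apply: priestley_sep => yw; exact: nSw (Sy w yw).
apply: filterS (open_nbhs_nbhs (conj oA Ay)) => p Ap; apply/int1P => q pq.
exact: contrapT (AS q (uA _ _ Ap pq)).
Qed.

Lemma priestley_clopen_upset_basis z O : open O -> O z ->
  exists C D, [/\ clopen_upset le C, clopen_upset le D, C z, ~ D z &
                  C `\` D `<=` O].
Proof.
move=> oO Oz.
pose P A :=
  exists C D, [/\ clopen_upset le C, clopen_upset le D & A = C `\` D].
have PT : P setT.
  exists setT, set0; rewrite setD0.
  by split; [exact: clopen_upsetT|exact: clopen_upset0|].
have PI : setI_closed P.
  move=> _ _ [C1 [D1 [C1u D1u ->]]] [C2 [D2 [C2u D2u ->]]].
  exists (C1 `&` C2), (D1 `|` D2).
  split; [exact: clopen_upsetI|exact: clopen_upsetU|].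
  by rewrite !setDE setCU setIACA.
have Pcl A : P A -> closed A.
  move=> [C [D [[[_ cC] _] [[oD _] _] ->]]]; rewrite setDE.
  by apply: closedI => //; rewrite closedC.
have cF : compact (~` O).
  by apply: subclosed_compact compactT _ => //; rewrite closedC.
have [|_ [C [D [Cu Du ->]]] [[Cz nDz] CDO]] :=
  compact_separation _ z _ PT PI Pcl cF.
  move=> w nOw; have [zw|nzw] := pselect (le z w).
  - have [|U Uu [Uw nUz]] := priestley_sep w z.
      by move=> wz; apply: nOw; rewrite -(le_anti _ _ zw wz).
    exists (setT `\` U).
      by exists setT, U; split=> //; exact: clopen_upsetT.
    by split; [split|case].
  - have [U Uu [Uz nUw]] := priestley_sep z w nzw.
    exists (U `\` set0).
      by exists U, set0; split=> //; exact: clopen_upset0.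
    by split; [split|case].
by exists C, D; split => // x CDx; exact: contrapT (CDO x CDx).
Qed.

Lemma distributive_DMjoin_sub_closure UU : DMjoin_distributive le UU ->
  DMjoin le UU `<=` closure (\bigcup_(U in UU) U).
Proof.
set W := \bigcup_(U in UU) U => distr z Jz.
apply: contrapT => /existsNP [B /not_implyP [zB WB0]].
have [C [D [Cu Du Cz nDz CDB]]] :=
  priestley_clopen_upset_basis _ _ (@open_interior _ B) zB.
have CWD : C `&` W `<=` D.
  move=> p [Cp Wp]; apply: contrapT => nDp; apply: WB0; exists p; split => //.
  exact: interior_subset (CDB p (conj Cp nDp)).
have : (C `&` DMjoin le UU) z by [].
rewrite (distr C (clopen_upset_DM le_refl Cu)).
rewrite /DMjoin bigcup_image -setI_bigcupr.
by move/(int1_cl2_sub_DM (clopen_upset_DM le_refl Du) CWD).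
Qed.

End Priestley.

Theorem theorem5p5 (T : topologicalType) (le : T -> T -> Prop)
  (hX : priestley le) (UU : set (set T)) (hUU : forall U, UU U -> is_DM le U) :
  DMjoin_distributive le UU <-> DMjoin le UU = int1 le (closure (\bigcup_(U in UU) U)).
Proof.
have [_ [[le_refl [_ le_trans]] _]] := hX.
split => [distr | Jcl V VDM].
- apply/seteqP; split; last exact/int1S/closure_sub_cl2.
  apply: open_upset_sub_int1; first exact: priestley_int1_open.
    exact: int1_upset.
  exact: distributive_DMjoin_sub_closure.
- rewrite {1}Jcl /DMjoin bigcup_image -setI_bigcupr.
  apply/seteqP; split; first exact: setI_int1_closure_sub VDM.1 VDM.2.1.
  move=> x Jx; split; first exact: int1_cl2_sub_DM VDM (@subIsetl _ _ _) x Jx.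
  by move: x Jx; rewrite -Jcl; apply/int1S/cl2S; exact: subIsetr.
Qed.
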